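(* Let $K\ge 2$, let $\bm{\ell}\in\mathbb{R}^K$ be a logit vector, and let $\hat{\bm{\sigma}}=\mathrm{softmax}(\bm{\ell})\in(0,1)^K$, i.e. $\hat{\bm{\sigma}}_i=\exp(\bm{\ell}_i)/\sum_{k=1}^K\exp(\bm{\ell}_k)$. Define the logit distance vector $\bm{d}\in\mathbb{R}^K$ by $\bm{d}_k=\max_{1\le i\le K}\bm{\ell}_i-\bm{\ell}_k$, and let ${\bm{u}}=(1/K,\dots,1/K)$ be the uniform distribution on $K$ classes. Then $$\mathrm{KL}[{\bm{u}}\,\|\,\hat{\bm{\sigma}}]\;\le\;\frac{1}{K}\sum_{i=1}^K\bm{d}_i\;\le\;\mathrm{KL}[{\bm{u}}\,\|\,\hat{\bm{\sigma}}]+\log K,$$ equivalently, writing $\mathcal{C}=-\frac{1}{K}\sum_{k=1}^K\log\hat{\bm{\sigma}}_k=\mathrm{KL}[{\bm{u}}\|\hat{\bm{\sigma}}]+\log K$, one has $\mathcal{C}-\log K\le \frac1K\sum_i\bm{d}_i\le \mathcal{C}$.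
   Context: $\mathrm{KL}[{\bm{u}}\|\hat{\bm{\sigma}}]=\sum_{k=1}^K u_k\log(u_k/\hat{\bm{\sigma}}_k)$ with natural logarithm. The logit-distance vector corresponds to a hard constraint $\bm{d}=\bm{0}$ (all logits equal), and $\frac1K\sum_i \bm{d}_i$ is the associated linear penalty. *)

From HB Require Import structures.
From mathcomp Require Import all_boot all_order all_algebra.
From mathcomp Require Import all_classical all_reals all_analysis.
Set Implicit Arguments. Unset Strict Implicit. Unset Printing Implicit Defensive.
Import Order.TTheory GRing.Theory Num.Theory.
Local Open Scope ring_scope.

Definition softmax (R : realType) (K : nat) (l : 'I_K -> R) (i : 'I_K) : R :=
  expR (l i) / \sum_(k < K) expR (l k).

(* logit distance vector: d_k = max_{i} l_i - l_k.
   The iterated max starts from l k itself, which is harmless since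
   l k is one of the l_i; hence this is exactly max_i l_i - l_k. *)
Definition logit_dist (R : realType) (K : nat) (l : 'I_K -> R) (k : 'I_K) : R :=
  \big[Num.max/l k]_(i < K) l i - l k.

Definition KL (R : realType) (K : nat) (u s : 'I_K -> R) : R :=
  \sum_(k < K) u k * ln (u k / s k).

Definition uniform (R : realType) (K : nat) (k : 'I_K) : R := K%:R^-1.

From HB Require Import structures.
From mathcomp Require Import all_boot all_order all_algebra.
From mathcomp Require Import all_classical all_reals all_analysis.
From mathcomp Require Import lra.
Import Order.TTheory GRing.Theory Num.Theory.
Local Open Scope ring_scope.

(* With M = max_i l_i and S = sum_k exp(l_k), both sides are affine in the
   mean logit: KL[u || softmax l] = ln S - ln K - mean(l) and
   mean(d) = M - mean(l).  The claim thus reduces to the log-sum-exp bounds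
   exp M <= S <= K exp M. *)

Lemma bigmax_seed_eq {d} {T : orderType d} {I : finType} (F : I -> T) (i j : I) :
  \big[Order.max/F i]_k F k = \big[Order.max/F j]_k F k.
Proof.
by apply/le_anti/andP; split; apply: bigmax_le => [|k _]; apply: le_bigmax.
Qed.

Section LogSumExp.
Context {R : realType} {I : finType} (l : I -> R).

Lemma sum_expR_gt0 (i0 : I) : 0 < \sum_k expR (l k).
Proof. by rewrite (bigD1 i0) //= ltr_pwDl ?expR_gt0 ?sumr_ge0. Qed.

Lemma le_ln_sum_expR (i : I) : l i <= ln (\sum_k expR (l k)).
Proof.
rewrite -[l i]expRK ler_ln ?posrE ?expR_gt0 ?(sum_expR_gt0 i) //.
by rewrite (bigD1 i) //= lerDl sumr_ge0 // => k _; apply: expR_ge0.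
Qed.

Lemma bigmax_le_ln_sum_expR (i0 : I) :
  \big[Num.max/l i0]_i l i <= ln (\sum_k expR (l k)).
Proof. by apply: bigmax_le => [|i _]; apply: le_ln_sum_expR. Qed.

Lemma ln_sum_expR_le_bigmax (i0 : I) :
  ln (\sum_k expR (l k)) <= \big[Num.max/l i0]_i l i + ln (#|I|%:R : R).
Proof.
set M := \big[Num.max/l i0]_i l i.
have card_gt0 : (0 < #|I|%:R :> R) by rewrite ltr0n; apply/card_gt0P; exists i0.
rewrite -[M in M + _]expRK -lnM ?posrE ?expR_gt0 //.
rewrite ler_ln ?posrE ?mulr_gt0 ?expR_gt0 ?(sum_expR_gt0 i0) //.
rewrite mulr_natr -sumr_const; apply: ler_sum => i _.
by rewrite ler_expR; apply: le_bigmax.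
Qed.

End LogSumExp.

Section UniformSoftmax.
Context {R : realType} {K : nat} (l : 'I_K -> R).

Lemma ln_softmax (k : 'I_K) :
  ln (softmax l k) = l k - ln (\sum_(i < K) expR (l i)).
Proof.
by rewrite /softmax ln_div ?expRK ?posrE ?expR_gt0 ?(sum_expR_gt0 l k).
Qed.

Lemma KL_uniform_softmax (i0 : 'I_K) :
  KL (@uniform R K) (softmax l)
  = ln (\sum_(i < K) expR (l i)) - ln (K%:R : R) - K%:R^-1 * \sum_(i < K) l i.
Proof.
have K_gt0 : (0 < K%:R :> R) by rewrite ltr0n (leq_ltn_trans _ (ltn_ord i0)).
set S := \sum_(i < K) expR (l i).
rewrite /KL /uniform.
under eq_bigr => k _ do
  rewrite ln_div ?posrE ?invr_gt0 ?divr_gt0 ?expR_gt0 ?(sum_expR_gt0 l k) //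
          lnV ?posrE // ln_softmax -/S.
rewrite -mulr_sumr.
have -> : \sum_(k < K) (- ln (K%:R : R) - (l k - ln S))
          = K%:R * (ln S - ln K%:R) - \sum_(k < K) l k.
  rewrite (eq_bigr (fun k => ln S - ln K%:R - l k)) => [|k _]; last by lra.
  by rewrite sumrB sumr_const card_ord mulr_natl.
by rewrite mulrBr mulKf ?lt0r_neq0.
Qed.

Lemma mean_logit_dist (i0 : 'I_K) :
  K%:R^-1 * \sum_(i < K) logit_dist l i
  = \big[Num.max/l i0]_i l i - K%:R^-1 * \sum_(i < K) l i.
Proof.
have K_neq0 : (K%:R != 0 :> R) by rewrite pnatr_eq0 -lt0n (leq_ltn_trans _ (ltn_ord i0)).
rewrite /logit_dist sumrB mulrBr; congr (_ - _).
under eq_bigr => k _ do rewrite (bigmax_seed_eq l k i0).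
by rewrite sumr_const card_ord -[X in _ * X]mulr_natl mulKf.
Qed.

End UniformSoftmax.

Theorem proposition3p3 (R : realType) (K : nat) (hK : (2 <= K)%N)
    (l : 'I_K -> R) :
  KL (@uniform R K) (softmax l)
    <= K%:R^-1 * \sum_(i < K) logit_dist l i
  /\ K%:R^-1 * \sum_(i < K) logit_dist l i
    <= KL (@uniform R K) (softmax l) + ln (K%:R : R).
Proof.
pose i0 : 'I_K := Ordinal (ltnW hK).
rewrite (KL_uniform_softmax l i0) (mean_logit_dist l i0).
have := bigmax_le_ln_sum_expR l i0.
have := ln_sum_expR_le_bigmax l i0; rewrite card_ord.
split; lra.
Qed.
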